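(* Let $X$ be a metric space and $n\ge0$. Suppose that for every $r>0$ there is a subspace $X_r\subset X$ such that $\operatorname{asdim}(X_r)\le n$ and $r\text{-}\dim(X\setminus X_r)\le n$. Then $\operatorname{asdim}(X)\le n$.
   Context: For $r>0$, the $r$-components of a set $C$ in a metric space are the equivalence classes of points of $C$ joined by finite sequences in $C$ with consecutive distances $\le r$. The $r$-scale dimension $r\text{-}\dim(Z)$ of a metric space $Z$ is the smallest $n\ge0$ such that $Z=Z_1\cup\dots\cup Z_{n+1}$ where, for each $i$, the $r$-components of $Z_i$ have uniformly bounded diameters. $\operatorname{asdim}(Z)\le n$ iff for every $r>0$ there are $D<\infty$ and a decomposition $Z=Z_1\cup\dots\cup Z_{n+1}$ such that all $r$-components of each $Z_i$ have diameter $\le D$ (i.e. $r\text{-}\dim(Z)\le n$ for all $r>0$). *)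

From Stdlib Require Import Reals Relations.
Open Scope R_scope.

Definition is_metric {X : Type} (d : X -> X -> R) : Prop :=
  (forall x y, 0 <= d x y) /\
  (forall x y, d x y = 0 <-> x = y) /\
  (forall x y, d x y = d y x) /\
  (forall x y z, d x z <= d x y + d y z).

Definition r_step {X : Type} (d : X -> X -> R) (C : X -> Prop) (r : R) (x y : X) : Prop :=
  C x /\ C y /\ d x y <= r.

Definition r_connected {X : Type} (d : X -> X -> R) (C : X -> Prop) (r : R) (x y : X) : Prop :=
  C x /\ C y /\ clos_refl_trans X (r_step d C r) x y.

Definition r_components_bounded {X : Type} (d : X -> X -> R) (C : X -> Prop) (r D : R) : Prop :=
  forall x y, r_connected d C r x y -> d x y <= D.

Definition r_dim_le {X : Type} (d : X -> X -> R) (Z : X -> Prop) (r : R) (n : nat) : Prop :=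
  exists (U : nat -> X -> Prop) (D : R),
    (forall x, Z x <-> exists i, (i <= n)%nat /\ U i x) /\
    (forall i, (i <= n)%nat -> r_components_bounded d (U i) r D).

Definition asdim_le {X : Type} (d : X -> X -> R) (Z : X -> Prop) (n : nat) : Prop :=
  forall r, 0 < r -> r_dim_le d Z r n.

(* Fix r and split X = X_r ∪ (X \ X_r).  Decompose X \ X_r into pieces W_i whose
   r-components have diameter <= D, and X_r, at the larger scale D + 2r, into
   pieces V_i whose (D + 2r)-components have diameter <= D'.  In an r-component
   of V_i ∪ W_i two consecutive points of V_i are separated by a run inside a
   single r-component of W_i, so they are at distance <= D + 2r: all points of
   V_i in the component lie in one (D + 2r)-component of V_i, and every other
   point is within D + r of one of them.  Hence the r-components of V_i ∪ W_i
   have diameter <= 2(D + r) + D'. *)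
From Pilot Require Import Defs.
From Stdlib Require Import Reals Relations Lra Classical.
Open Scope R_scope.

Lemma r_dim_le_nonneg_bound {X : Type} (d : X -> X -> R) (Z : X -> Prop) r n :
  r_dim_le d Z r n ->
  exists (U : nat -> X -> Prop) (D : R), 0 <= D /\
    (forall x, Z x <-> exists i, (i <= n)%nat /\ U i x) /\
    (forall i, (i <= n)%nat -> r_components_bounded d (U i) r D).
Proof.
  intros [U [D [hcover hbound]]].
  exists U, (Rmax D 0); split; [apply Rmax_r|split; [exact hcover|]].
  intros i hi x y hxy; specialize (hbound i hi x y hxy).
  pose proof (Rmax_l D 0); lra.
Qed.

Lemma r_dim_le_ext {X : Type} (d : X -> X -> R) (Z Z' : X -> Prop) r n :
  (forall x, Z x <-> Z' x) -> r_dim_le d Z r n -> r_dim_le d Z' r n.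
Proof.
  intros hZ [U [D [hcover hbound]]].
  exists U, D; split; [|exact hbound].
  intros x; rewrite <- hZ; apply hcover.
Qed.

Section UnionOfScales.
Variables (X : Type) (d : X -> X -> R).
Hypothesis hd : is_metric d.

(* [Defs.] is needed: [r_step] alone names a constructor of [clos_refl_trans]. *)
Definition chain (C : X -> Prop) (t : R) : relation X := clos_refl_trans X (Defs.r_step d C t).

Lemma r_chain_sym (C : X -> Prop) (t : R) (x y : X) : chain C t x y -> chain C t y x.
Proof.
  destruct hd as [_ [_ [dsym _]]].
  unfold chain; induction 1 as [x y [Cx [Cy dxy]]| |]; [|apply rt_refl|eapply rt_trans; eauto].
  apply rt_step; repeat split; auto; rewrite dsym; exact dxy.
Qed.

Variables (V W : X -> Prop) (r D : R).
Hypotheses (r_ge0 : 0 <= r) (D_ge0 : 0 <= D).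
Hypothesis W_bounded : r_components_bounded d W r D.

(* v is a point of V reached from x by an r-chain whose points other than v lie in W. *)
Definition attached (x v : X) : Prop :=
  V v /\ (x = v \/ W x /\ exists w, W w /\ chain W r x w /\ d w v <= r).

Lemma attached_dist x v : attached x v -> d x v <= D + r.
Proof.
  destruct hd as [_ [d0 [_ dtri]]].
  intros [_ [->|[Wx [w [Ww [cxw dwv]]]]]].
  - rewrite (proj2 (d0 v v) eq_refl); lra.
  - assert (d x w <= D) by (apply W_bounded; repeat split; auto).
    pose proof (dtri x w v); lra.
Qed.

Lemma union_chain_cases x y :
  clos_refl_trans_1n X (Defs.r_step d (fun z => V z \/ W z) r) x y -> V y \/ W y ->
  (W x /\ W y /\ chain W r x y) \/
  exists v1 v2, attached x v1 /\ attached y v2 /\ chain V (D + 2 * r) v1 v2.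
Proof.
  destruct hd as [_ [_ [dsym dtri]]].
  induction 1 as [y|x x' y [[Vx|Wx] [_ dxx']] _ IH]; intros Uy.
  - destruct Uy as [Vy|Wy].
    + right; exists y, y; repeat split; auto; apply rt_refl.
    + left; repeat split; auto; apply rt_refl.
  - right; destruct (IH Uy) as [[Wx' [Wy cy]]|[v1 [v2 [att1 [att2 cv]]]]].
    + exists x, x; split; [split; auto|split; [|apply rt_refl]].
      split; auto; right; split; auto; exists x'; repeat split; auto.
      * apply r_chain_sym; exact cy.
      * rewrite dsym; exact dxx'.
    + exists x, v2; split; [split; auto|split; auto].
      eapply rt_trans; [apply rt_step|exact cv].
      pose proof (attached_dist _ _ att1); pose proof (dtri x x' v1).
      destruct att1 as [Vv1 _]; repeat split; auto; lra.
  - destruct (IH Uy) as [[Wx' [Wy cy]]|[v1 [v2 [att1 [att2 cv]]]]].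
    + left; repeat split; auto.
      eapply rt_trans; [apply rt_step|exact cy]; repeat split; auto.
    + right; exists v1, v2; split; [|split; auto].
      destruct att1 as [Vv1 [<-|[Wx' [w [Ww [cw dw]]]]]]; split; auto; right; split; auto.
      * exists x; repeat split; auto; apply rt_refl.
      * exists w; repeat split; auto.
        eapply rt_trans; [apply rt_step|exact cw]; repeat split; auto.
Qed.

Lemma r_components_bounded_union D' :
  0 <= D' -> r_components_bounded d V (D + 2 * r) D' ->
  r_components_bounded d (fun z => V z \/ W z) r (2 * (D + r) + D').
Proof.
  intros D'_ge0 V_bounded x y [_ [Uy cxy]].
  destruct hd as [_ [_ [dsym dtri]]].
  destruct (union_chain_cases x y (clos_rt_rt1n _ _ _ _ cxy) Uy)
    as [[Wx [Wy cW]]|[v1 [v2 [att1 [att2 cV]]]]].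
  - assert (d x y <= D) by (apply W_bounded; repeat split; auto); lra.
  - pose proof (attached_dist _ _ att1); pose proof (attached_dist _ _ att2).
    destruct att1 as [Vv1 _], att2 as [Vv2 _].
    assert (d v1 v2 <= D') by (apply V_bounded; repeat split; auto).
    pose proof (dtri x v1 y); pose proof (dtri v1 v2 y); rewrite (dsym v2 y) in *; lra.
Qed.

End UnionOfScales.

Lemma r_dim_le_union {X : Type} (d : X -> X -> R) (hd : is_metric d)
    (Y Y' : X -> Prop) r n :
  0 < r -> asdim_le d Y n -> r_dim_le d Y' r n ->
  r_dim_le d (fun x => Y x \/ Y' x) r n.
Proof.
  intros r_gt0 hY hY'.
  destruct (r_dim_le_nonneg_bound d Y' r n hY') as [W [D [D_ge0 [W_cover W_bounded]]]].
  destruct (r_dim_le_nonneg_bound d Y (D + 2 * r) n (hY (D + 2 * r) ltac:(lra)))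
    as [V [D' [D'_ge0 [V_cover V_bounded]]]].
  exists (fun i x => V i x \/ W i x), (2 * (D + r) + D'); split.
  - intros x; rewrite V_cover, W_cover; split.
    + intros [[i [hi Vx]]|[i [hi Wx]]]; exists i; auto.
    + intros [i [hi [Vx|Wx]]]; [left|right]; exists i; auto.
  - intros i hi.
    apply r_components_bounded_union; auto; lra.
Qed.

Theorem mainTheorem10 (X : Type) (d : X -> X -> R) (hd : is_metric d) (n : nat) :
  (forall r, 0 < r ->
     exists Xr : X -> Prop,
       asdim_le d Xr n /\ r_dim_le d (fun x => ~ Xr x) r n) ->
  asdim_le d (fun _ => True) n.
Proof.
  intros hsplit r r_gt0.
  destruct (hsplit r r_gt0) as [Xr [hXr hrest]].
  apply (r_dim_le_ext d (fun x => Xr x \/ ~ Xr x)).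
  - intros x; split; [trivial|intros _; apply classic].
  - exact (r_dim_le_union d hd _ _ r n r_gt0 hXr hrest).
Qed.
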